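(* Assume each bus has either no generator or at least two generators, and $x^*_n>0$ for all $n$; let $b^*$ be the unique efficient Nash equilibrium, $b^*_n=2a_nx^*_n+c_n$. Consider an execution of the Bid Adjustment Algorithm with $0<\beta_k<2a_n$ for all $n$ and $k\ge1$. Let $0<r<\|b(1)-b^*\|$ and assume that for all $k\ge1$, $$\alpha\le\beta_k\le B(r):=\frac{1}{2a_{\max}}\Bigl(\frac{1}{2a_{\min}^2}+\frac{16\bar y^2}{r^2}\Bigr)^{-1}$$ for some $\alpha>0$, where $a_{\max}=\max_na_n$, $a_{\min}=\min_na_n$, $\bar y=\sum_iy_i$. Then: (i) there exists $l\ge1$ such that $\|b(l)-b^*\|<r$ and, for all $k\in\{1,\dots,l-1\}$, $\|b(k)-b^*\|\ge r$ and $$\|b(k+1)-b^*\|\le\Bigl(1-\frac{\alpha}{2a_{\max}}\Bigr)^{k/2}\|b(1)-b^*\|;$$ (ii) for all $k\ge l$, $\|b(k)-b^*\|\le\bigl(1+\frac{B(r)}{2a_{\max}}\bigr)^{1/2}r$.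
   Context: Network: directed graph with buses $\{1,\dots,N_b\}$, edge set $\mathcal E$, line flow limits $\bar z_{ij}>0$, $G_i$ the set of generators at bus $i$ (the $G_i$ partition $\{1,\dots,N\}$), loads $y_i\ge0$. Generator $n$ has cost $f_n(x)=a_nx^2+c_nx$, $a_n>0$, $c_n\ge0$. DC-OPF: minimize $\sum_n f_n(x_n)$ over $(x,z)$ s.t. $\sum_{j:(i,j)\in\mathcal E}z_{ij}-\sum_{j:(j,i)\in\mathcal E}z_{ji}=\sum_{n\in G_i}x_n-y_i$ for all $i$, $|z_{ij}|\le\bar z_{ij}$, $x\ge0$; assumed feasible with optimizer $(x^*,z^* )$, $x^*$ unique. S-DC-OPF given bids $b\ge0$: same constraints, objective $\sum_n b_nx_n$. An efficient Nash equilibrium is in particular a bid $b^*$ for which $(x^*,z^* )$ optimizes S-DC-OPF with bids $b^*$ and $x^*_n=\arg\max_{x\ge0}(b^*_nx-f_n(x))$. $\|\cdot\|$ is the Euclidean norm. Bid Adjustment Algorithm: given stepsizes $\beta_k>0$, each generator picks $b_n(1)\ge c_n$. For each $k\ge1$: $q_n(k)=\arg\max_{q\ge0}(b_n(k)q-f_n(q))$; the operator selects an optimizer $(x^{\rm opt}(k),z^{\rm opt}(k))$ of S-DC-OPF with bids $b(k)$; and $b_n(k+1)=[\,b_n(k)+\beta_k(x^{\rm opt}_n(k)-q_n(k))\,]^+$, where $[u]^+=\max\{0,u\}$. *)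

From Stdlib Require Export Reals Lra List.
Export ListNotations.
Open Scope R_scope.

Definition rsum (n : nat) (f : nat -> R) : R :=
  fold_right Rplus 0 (map f (seq 0 n)).

(* Network data: buses 0..nb-1, generators 0..ng-1, directed edges,
   line limits, generator-to-bus map (bus_of n = i  iff  n in G_i), loads. *)
Record network := {
  nb : nat;
  ng : nat;
  edges : list (nat * nat);
  zbar : nat -> nat -> R;
  bus_of : nat -> nat;
  load : nat -> R
}.

Definition outflow (E : list (nat * nat)) (z : nat -> nat -> R) (i : nat) : R :=
  fold_right Rplus 0
    (map (fun e => if Nat.eqb (fst e) i then z (fst e) (snd e) else 0) E).

Definition inflow (E : list (nat * nat)) (z : nat -> nat -> R) (i : nat) : R :=
  fold_right Rplus 0
    (map (fun e => if Nat.eqb (snd e) i then z (fst e) (snd e) else 0) E).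

Definition injection (net : network) (x : nat -> R) (i : nat) : R :=
  rsum (ng net) (fun n => if Nat.eqb (bus_of net n) i then x n else 0).

Definition ngen_at (net : network) (i : nat) : nat :=
  length (filter (fun n => Nat.eqb (bus_of net n) i) (seq 0 (ng net))).

Definition feasible (net : network) (x : nat -> R) (z : nat -> nat -> R) : Prop :=
  (forall i, (i < nb net)%nat ->
     outflow (edges net) z i - inflow (edges net) z i
     = injection net x i - load net i) /\
  (forall i j, In (i, j) (edges net) -> Rabs (z i j) <= zbar net i j) /\
  (forall n, (n < ng net)%nat -> 0 <= x n).

Definition gcost (an cn xn : R) : R := an * xn ^ 2 + cn * xn.

Definition total_cost (net : network) (a c x : nat -> R) : R :=
  rsum (ng net) (fun n => gcost (a n) (c n) (x n)).

Definition dcopf_opt (net : network) (a c : nat -> R)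
    (x : nat -> R) (z : nat -> nat -> R) : Prop :=
  feasible net x z /\
  forall x' z', feasible net x' z' -> total_cost net a c x <= total_cost net a c x'.

Definition sdcopf_opt (net : network) (b : nat -> R)
    (x : nat -> R) (z : nat -> nat -> R) : Prop :=
  feasible net x z /\
  forall x' z', feasible net x' z' ->
    rsum (ng net) (fun n => b n * x n) <= rsum (ng net) (fun n => b n * x' n).

Definition is_best_response (an cn bn q : R) : Prop :=
  0 <= q /\ forall q', 0 <= q' -> bn * q' - gcost an cn q' <= bn * q - gcost an cn q.

(* An execution of the Bid Adjustment Algorithm: bids b k n (k >= 1),
   best responses q k n, operator's S-DC-OPF optimizers (xo k, zo k). *)
Definition BAA_execution (net : network) (a c : nat -> R) (beta : nat -> R)
    (b q : nat -> nat -> R) (xo : nat -> nat -> R) (zo : nat -> nat -> nat -> R) : Prop :=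
  (forall n, (n < ng net)%nat -> c n <= b 1%nat n) /\
  forall k, (1 <= k)%nat ->
    (forall n, (n < ng net)%nat -> is_best_response (a n) (c n) (b k n) (q k n)) /\
    sdcopf_opt net (b k) (xo k) (zo k) /\
    (forall n, (n < ng net)%nat ->
       b (S k) n = Rmax 0 (b k n + beta k * (xo k n - q k n))).

Definition bdist (N : nat) (u v : nat -> R) : R :=
  sqrt (rsum N (fun n => (u n - v n) ^ 2)).

Definition amax (net : network) (a : nat -> R) : R :=
  fold_right Rmax (a 0%nat) (map a (seq 0 (ng net))).
Definition amin (net : network) (a : nat -> R) : R :=
  fold_right Rmin (a 0%nat) (map a (seq 0 (ng net))).
Definition ybar (net : network) : R := rsum (nb net) (load net).

Definition Bstep (net : network) (a : nat -> R) (r : R) : R :=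
  / (2 * amax net a) *
  / (/ (2 * amin net a ^ 2) + 16 * ybar net ^ 2 / r ^ 2).

From Stdlib Require Import Reals List Lra Lia Classical Wf_nat.
Open Scope R_scope.

(** Bids never fall below the marginal cost at zero output, so the projection
    in the update is inactive and best responses are affine, q = (b - c)/(2a).
    Writing u = b(k) - b* and e = x^opt(k) - x*, each coordinate moves by
    u + beta (e - u/(2a)).  The cross term <u, e> is nonpositive, because
    x^opt(k) minimises the bid cost for b(k) while x* satisfies the
    first-order optimality condition of DC-OPF, whose gradient is b*; and
    ||e||^2 <= 2 ybar^2 by power balance.  Hence
    ||u'||^2 <= (1 - beta/a_max + beta^2/(2 a_min^2)) ||u||^2 + 4 beta^2 ybar^2,
    and the step-size bound B(r) turns this into a contraction by the factor
    1 - beta/(2 a_max) outside the ball of radius r, while keeping that ball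
    invariant. *)

Lemma rsum_0 f : rsum 0 f = 0.
Proof. reflexivity. Qed.

Lemma rsum_S n f : rsum (S n) f = rsum n f + f n.
Proof.
  unfold rsum. rewrite seq_S, map_app, fold_right_app; simpl.
  induction (map f (seq 0 n)) as [|x l IH]; simpl; [ring | rewrite IH; ring].
Qed.

Lemma rsum_ext n f g : (forall i, (i < n)%nat -> f i = g i) -> rsum n f = rsum n g.
Proof.
  induction n as [|n IH]; intros H; [reflexivity|].
  rewrite !rsum_S, IH by (intros; apply H; lia). now rewrite H by lia.
Qed.

Lemma rsum_le n f g : (forall i, (i < n)%nat -> f i <= g i) -> rsum n f <= rsum n g.
Proof.
  induction n as [|n IH]; intros H; [apply Rle_refl|].
  rewrite !rsum_S. apply Rplus_le_compat; [apply IH; intros|]; apply H; lia.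
Qed.

Lemma rsum_nonneg n f : (forall i, (i < n)%nat -> 0 <= f i) -> 0 <= rsum n f.
Proof.
  induction n as [|n IH]; intros H; [apply Rle_refl|].
  rewrite rsum_S. apply Rplus_le_le_0_compat; [apply IH; intros|]; apply H; lia.
Qed.

Lemma rsum_const0 n : rsum n (fun _ => 0) = 0.
Proof. induction n as [|n IH]; [reflexivity|]. rewrite rsum_S, IH. ring. Qed.

Lemma rsum_plus n f g : rsum n (fun i => f i + g i) = rsum n f + rsum n g.
Proof. induction n as [|n IH]; [rewrite !rsum_0; ring|]. rewrite !rsum_S, IH. ring. Qed.

Lemma rsum_minus n f g : rsum n (fun i => f i - g i) = rsum n f - rsum n g.
Proof. induction n as [|n IH]; [rewrite !rsum_0; ring|]. rewrite !rsum_S, IH. ring. Qed.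

Lemma rsum_scal n k f : rsum n (fun i => k * f i) = k * rsum n f.
Proof. induction n as [|n IH]; [rewrite !rsum_0; ring|]. rewrite !rsum_S, IH. ring. Qed.

Lemma rsum_swap n m (f : nat -> nat -> R) :
  rsum n (fun i => rsum m (fun j => f i j)) = rsum m (fun j => rsum n (fun i => f i j)).
Proof.
  induction n as [|n IH].
  - symmetry. apply rsum_const0.
  - rewrite rsum_S, IH, <- rsum_plus. apply rsum_ext. intros. now rewrite rsum_S.
Qed.

Lemma rsum_delta n k v : (k < n)%nat -> rsum n (fun i => if Nat.eqb k i then v else 0) = v.
Proof.
  induction n as [|n IH]; intros Hk; [lia|]. rewrite rsum_S.
  destruct (Nat.eqb_spec k n) as [->|Hne].
  - rewrite (rsum_ext _ _ (fun _ => 0)), rsum_const0; [ring|].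
    intros i Hi. destruct (Nat.eqb_spec n i); [lia | reflexivity].
  - rewrite IH by lia. ring.
Qed.

Lemma rsum_sq_le n f : (forall i, (i < n)%nat -> 0 <= f i) ->
  rsum n (fun i => f i ^ 2) <= rsum n f ^ 2.
Proof.
  induction n as [|n IH]; intros H; [rewrite !rsum_0; lra|]. rewrite !rsum_S.
  assert (0 <= f n) by (apply H; lia).
  assert (0 <= rsum n f) by (apply rsum_nonneg; intros; apply H; lia).
  assert (rsum n (fun i => f i ^ 2) <= rsum n f ^ 2) by (apply IH; intros; apply H; lia).
  nra.
Qed.

Definition sqdist (N : nat) (u v : nat -> R) : R := rsum N (fun n => (u n - v n) ^ 2).

Lemma flows_cancel (E : list (nat * nat)) z n :
  (forall i j, In (i, j) E -> (i < n)%nat /\ (j < n)%nat) ->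
  rsum n (fun i => outflow E z i - inflow E z i) = 0.
Proof.
  induction E as [|[i j] E IH]; intros HE.
  { rewrite <- (rsum_const0 n). apply rsum_ext. intros. unfold outflow, inflow; simpl; ring. }
  destruct (HE i j (or_introl eq_refl)) as [Hi Hj].
  rewrite (rsum_ext _ _ (fun k => ((if Nat.eqb i k then z i j else 0)
                                 - (if Nat.eqb j k then z i j else 0))
                                + (outflow E z k - inflow E z k)))
    by (intros; unfold outflow, inflow; simpl; ring).
  rewrite rsum_plus, rsum_minus, !rsum_delta, IH by (auto; intros; apply HE; right; auto).
  ring.
Qed.

Lemma rsum_injection net x :
  (forall n, (n < ng net)%nat -> (bus_of net n < nb net)%nat) ->
  rsum (nb net) (injection net x) = rsum (ng net) x.
Proof.
  intros Hbus. unfold injection. rewrite rsum_swap.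
  apply rsum_ext. intros n Hn. now apply rsum_delta, Hbus.
Qed.

Lemma feasible_total_generation net x z :
  (forall i j, In (i, j) (edges net) -> (i < nb net)%nat /\ (j < nb net)%nat) ->
  (forall n, (n < ng net)%nat -> (bus_of net n < nb net)%nat) ->
  feasible net x z -> rsum (ng net) x = ybar net.
Proof.
  intros Hedges Hbus [Hbal _].
  assert (Hsum : rsum (nb net) (fun i => outflow (edges net) z i - inflow (edges net) z i)
               = rsum (nb net) (fun i => injection net x i - load net i))
    by (apply rsum_ext; exact Hbal).
  rewrite flows_cancel, rsum_minus, rsum_injection in Hsum by assumption.
  unfold ybar. lra.
Qed.

Lemma feasible_sqdist_le net x z x' z' :
  (forall i j, In (i, j) (edges net) -> (i < nb net)%nat /\ (j < nb net)%nat) ->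
  (forall n, (n < ng net)%nat -> (bus_of net n < nb net)%nat) ->
  feasible net x z -> feasible net x' z' -> sqdist (ng net) x x' <= 2 * ybar net ^ 2.
Proof.
  intros Hedges Hbus F F'.
  pose proof (proj2 (proj2 F)) as Hx. pose proof (proj2 (proj2 F')) as Hx'.
  pose proof (rsum_sq_le _ _ Hx) as Sx. pose proof (rsum_sq_le _ _ Hx') as Sx'.
  rewrite (feasible_total_generation net x z) in Sx by assumption.
  rewrite (feasible_total_generation net x' z') in Sx' by assumption.
  apply Rle_trans with (rsum (ng net) (fun n => x n ^ 2 + x' n ^ 2)).
  - apply rsum_le. intros n Hn. specialize (Hx n Hn). specialize (Hx' n Hn). nra.
  - rewrite rsum_plus. lra.
Qed.

Lemma outflow_affine E z1 z2 t i :
  outflow E (fun p q => z1 p q + t * (z2 p q - z1 p q)) i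
  = outflow E z1 i + t * (outflow E z2 i - outflow E z1 i).
Proof.
  induction E as [|[p q] E IH]; unfold outflow in *; simpl; [ring|].
  rewrite IH. destruct (Nat.eqb p i); ring.
Qed.

Lemma inflow_affine E z1 z2 t i :
  inflow E (fun p q => z1 p q + t * (z2 p q - z1 p q)) i
  = inflow E z1 i + t * (inflow E z2 i - inflow E z1 i).
Proof.
  induction E as [|[p q] E IH]; unfold inflow in *; simpl; [ring|].
  rewrite IH. destruct (Nat.eqb q i); ring.
Qed.

Lemma injection_affine net x1 x2 t i :
  injection net (fun n => x1 n + t * (x2 n - x1 n)) i
  = injection net x1 i + t * (injection net x2 i - injection net x1 i).
Proof.
  unfold injection. rewrite <- rsum_minus, <- rsum_scal, <- rsum_plus.
  apply rsum_ext. intros. destruct (Nat.eqb _ _); ring.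
Qed.

Lemma feasible_convex net x1 z1 x2 z2 t : 0 <= t <= 1 ->
  feasible net x1 z1 -> feasible net x2 z2 ->
  feasible net (fun n => x1 n + t * (x2 n - x1 n))
               (fun p q => z1 p q + t * (z2 p q - z1 p q)).
Proof.
  intros Ht [B1 [L1 P1]] [B2 [L2 P2]]. split; [|split].
  - intros i Hi. rewrite outflow_affine, inflow_affine, injection_affine.
    specialize (B1 i Hi). specialize (B2 i Hi). nra.
  - intros i j Hij. specialize (L1 i j Hij). specialize (L2 i j Hij).
    replace (z1 i j + t * (z2 i j - z1 i j)) with ((1 - t) * z1 i j + t * z2 i j) by ring.
    eapply Rle_trans; [apply Rabs_triang|].
    rewrite !Rabs_mult, (Rabs_pos_eq t), (Rabs_pos_eq (1 - t)) by lra. nra.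
  - intros n Hn. specialize (P1 n Hn). specialize (P2 n Hn). nra.
Qed.

Lemma nonneg_of_unit_quadratic d Q : 0 <= Q ->
  (forall t, 0 <= t <= 1 -> 0 <= t * d + t ^ 2 * Q) -> 0 <= d.
Proof.
  intros HQ H. destruct (Rle_lt_dec 0 d) as [|Hd]; [assumption|]. exfalso.
  set (t := - d / (Q - d)).
  assert (Ht : t * (Q - d) = - d) by (unfold t; field; lra).
  assert (Htpos : 0 < t) by (unfold t; apply Rdiv_lt_0_compat; lra).
  assert (Ht1 : t <= 1) by nra.
  specialize (H t (conj (Rlt_le _ _ Htpos) Ht1)).
  (* [t] is chosen so that [d + t Q = t d], making the quadratic [t^2 d < 0]. *)
  replace (t * d + t ^ 2 * Q) with (t ^ 2 * d) in H by nra.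
  assert (0 < t ^ 2) by (apply pow_lt; lra). nra.
Qed.

Lemma dcopf_first_order net a c xs zs x z :
  (forall n, (n < ng net)%nat -> 0 <= a n) ->
  dcopf_opt net a c xs zs -> feasible net x z ->
  rsum (ng net) (fun n => (2 * a n * xs n + c n) * xs n)
  <= rsum (ng net) (fun n => (2 * a n * xs n + c n) * x n).
Proof.
  intros Ha [Fs Hmin] F.
  set (d := rsum (ng net) (fun n => (2 * a n * xs n + c n) * (x n - xs n))).
  set (Q := rsum (ng net) (fun n => a n * (x n - xs n) ^ 2)).
  assert (Hexpand : forall t, total_cost net a c (fun n => xs n + t * (x n - xs n))
                              = total_cost net a c xs + t * d + t ^ 2 * Q).
  { intros t. unfold total_cost, d, Q. rewrite <- !rsum_scal, <- !rsum_plus.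
    apply rsum_ext. intros. unfold gcost. ring. }
  assert (Hd : 0 <= d).
  { apply (nonneg_of_unit_quadratic d Q).
    - apply rsum_nonneg. intros n Hn. apply Rmult_le_pos; [auto | apply pow2_ge_0].
    - intros t Ht. specialize (Hmin _ _ (feasible_convex net xs zs x z t Ht Fs F)).
      rewrite Hexpand in Hmin. lra. }
  unfold d in Hd. rewrite (rsum_ext _ _ (fun n => (2 * a n * xs n + c n) * x n
                                         - (2 * a n * xs n + c n) * xs n)),
                  rsum_minus in Hd by (intros; ring).
  lra.
Qed.

Lemma fold_max_ge (l : list R) x0 y : In y l -> y <= fold_right Rmax x0 l.
Proof.
  induction l as [|x l IH]; simpl; [tauto|].
  intros [<-|Hy]; [apply Rmax_l | eapply Rle_trans; [apply IH, Hy | apply Rmax_r]].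
Qed.

Lemma fold_min_le (l : list R) x0 y : In y l -> fold_right Rmin x0 l <= y.
Proof.
  induction l as [|x l IH]; simpl; [tauto|].
  intros [<-|Hy]; [apply Rmin_l | eapply Rle_trans; [apply Rmin_r | apply IH, Hy]].
Qed.

Lemma fold_min_pos (l : list R) x0 : 0 < x0 -> (forall y, In y l -> 0 < y) ->
  0 < fold_right Rmin x0 l.
Proof.
  induction l as [|x l IH]; simpl; intros H0 Hl; [assumption|].
  apply Rmin_glb_lt; auto.
Qed.

Lemma amax_ge net a n : (n < ng net)%nat -> a n <= amax net a.
Proof. intros Hn. apply fold_max_ge, in_map, in_seq. lia. Qed.

Lemma amin_le net a n : (n < ng net)%nat -> amin net a <= a n.
Proof. intros Hn. apply fold_min_le, in_map, in_seq. lia. Qed.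

Lemma amin_pos net a : (0 < ng net)%nat ->
  (forall n, (n < ng net)%nat -> 0 < a n) -> 0 < amin net a.
Proof.
  intros Hng Ha. apply fold_min_pos; [now apply Ha|].
  intros y Hy. apply in_map_iff in Hy as [n [<- Hn]]. apply in_seq in Hn. apply Ha. lia.
Qed.

Lemma best_response_eq an cn bn q : 0 < an -> cn <= bn ->
  is_best_response an cn bn q -> q = (bn - cn) / (2 * an).
Proof.
  intros Ha Hc [Hq Hbest]. set (m := (bn - cn) / (2 * an)).
  assert (Hm : bn = 2 * an * m + cn) by (unfold m; field; lra).
  assert (Hm0 : 0 <= m) by (unfold m; apply Rmult_le_pos; [lra | left; apply Rinv_0_lt_compat; lra]).
  specialize (Hbest m Hm0). unfold gcost in Hbest. rewrite Hm in Hbest.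
  (* the profit gap is exactly [an (m - q)^2] *)
  assert (an * (m - q) ^ 2 <= 0) by nra.
  assert ((m - q) ^ 2 = 0) by (pose proof (pow2_ge_0 (m - q)); nra).
  nra.
Qed.

Lemma error_step_sq (u e a A m be : R) : 0 < m -> m <= a -> a <= A -> 0 <= be ->
  (u + be * (e - u / (2 * a))) ^ 2
  <= (1 - 2 * (be / (2 * A)) + be ^ 2 / (2 * m ^ 2)) * u ^ 2
     + 2 * be * (u * e) + 2 * be ^ 2 * e ^ 2.
Proof.
  intros Hm Hma HaA Hbe. set (g := u / (2 * a)).
  assert (HaA' : a / A <= 1).
  { apply (Rmult_le_reg_r A); [lra|]. unfold Rdiv. rewrite Rmult_assoc, Rinv_l; lra. }
  assert (Hma' : 1 <= a / m).
  { apply (Rmult_le_reg_r m); [lra|]. unfold Rdiv. rewrite Rmult_assoc, Rinv_l; lra. }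
  assert (Hgap : (1 - 2 * (be / (2 * A)) + be ^ 2 / (2 * m ^ 2)) * u ^ 2
                 + 2 * be * (u * e) + 2 * be ^ 2 * e ^ 2 - (u + be * (e - g)) ^ 2
               = be ^ 2 * (e + g) ^ 2 + 4 * a * be * g ^ 2 * (1 - a / A)
                 + 2 * be ^ 2 * g ^ 2 * ((a / m) ^ 2 - 1))
    by (unfold g; field; lra).
  assert (0 <= be ^ 2 * (e + g) ^ 2) by (apply Rmult_le_pos; apply pow2_ge_0).
  assert (0 <= 4 * a * be * g ^ 2 * (1 - a / A))
    by (apply Rmult_le_pos; [apply Rmult_le_pos; [nra | apply pow2_ge_0] | lra]).
  assert (0 <= 2 * be ^ 2 * g ^ 2 * ((a / m) ^ 2 - 1))
    by (apply Rmult_le_pos; [pose proof (pow2_ge_0 be); pose proof (pow2_ge_0 g); nra | nra]).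
  lra.
Qed.

Lemma Bstep_bound net a r be :
  0 < amax net a -> 0 < amin net a -> 0 < r -> 0 < be <= Bstep net a r ->
  be ^ 2 / (2 * amin net a ^ 2) * r ^ 2 + 4 * be ^ 2 * ybar net ^ 2
  <= be / (2 * amax net a) * r ^ 2.
Proof.
  intros HA Hm Hr [Hbe HB]. unfold Bstep in HB.
  set (K := / (2 * amin net a ^ 2) + 16 * ybar net ^ 2 / r ^ 2) in HB.
  assert (Hr2 : 0 < r ^ 2) by (apply pow_lt; lra).
  assert (HK : 0 < K).
  { unfold K. pose proof (pow2_ge_0 (ybar net)).
    assert (0 < / (2 * amin net a ^ 2)) by (apply Rinv_0_lt_compat; nra).
    assert (0 <= 16 * ybar net ^ 2 / r ^ 2)
      by (apply Rmult_le_pos; [lra | left; apply Rinv_0_lt_compat; lra]).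
    lra. }
  assert (HbK : be * K <= / (2 * amax net a)).
  { apply (Rmult_le_compat_r K) in HB; [|lra]. rewrite Rmult_assoc, Rinv_l in HB; lra. }
  (* the stated bound has [16 ybar^2]; a quarter of it suffices here *)
  assert (be ^ 2 / (2 * amin net a ^ 2) * r ^ 2 + 16 * be ^ 2 * ybar net ^ 2
          = be * r ^ 2 * (be * K)) by (unfold K; field; lra).
  replace (be / (2 * amax net a) * r ^ 2) with (be * r ^ 2 * / (2 * amax net a)) by (field; lra).
  pose proof (pow2_ge_0 (be * ybar net)).
  assert (be * r ^ 2 * (be * K) <= be * r ^ 2 * / (2 * amax net a))
    by (apply Rmult_le_compat_l; [nra | exact HbK]).
  nra.
Qed.

Lemma perturbed_contraction (s s' r p X Y : R) :
  0 < r -> 0 <= s -> 0 <= X -> 0 <= Y -> p <= 1 ->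
  X * r ^ 2 + Y <= p * r ^ 2 -> s' <= (1 - 2 * p + X) * s + Y ->
  (r ^ 2 <= s -> s' <= (1 - p) * s) /\ (s <= r ^ 2 -> s' <= r ^ 2).
Proof.
  intros Hr Hs HX HY Hp Hgain Hstep. assert (Hr2 : 0 < r ^ 2) by (apply pow_lt; lra).
  split; intros H.
  - assert ((p - X) * (s - r ^ 2) >= 0) by nra. nra.
  - destruct (Rle_lt_dec 0 (1 - 2 * p + X)).
    + assert ((1 - 2 * p + X) * s <= (1 - 2 * p + X) * r ^ 2) by nra. nra.
    + nra.
Qed.

Section FirstEntry.
Variables (s : nat -> R) (rho eps : R).
Hypothesis Hrho : 0 <= rho < 1.
Hypothesis Heps : 0 < eps.
Hypothesis Hstart : eps < s 1%nat.
Hypothesis Hcontract : forall k, (1 <= k)%nat -> eps <= s k -> s (S k) <= rho * s k.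
Hypothesis Htrap : forall k, (1 <= k)%nat -> s k <= eps -> s (S k) <= eps.

Lemma geometric_decay k : (forall j, (1 <= j <= k)%nat -> eps <= s j) ->
  s (S k) <= rho ^ k * s 1%nat.
Proof.
  induction k as [|k IH]; intros Habove; [simpl; lra|].
  eapply Rle_trans; [apply Hcontract; [lia | apply Habove; lia]|].
  simpl. rewrite Rmult_assoc. apply Rmult_le_compat_l; [lra|].
  apply IH. intros; apply Habove; lia.
Qed.

Lemma eventually_below : exists k, (1 <= k)%nat /\ s k < eps.
Proof.
  apply NNPP. intros Hnever.
  assert (Habove : forall k, (1 <= k)%nat -> eps <= s k).
  { intros k Hk. destruct (Rlt_le_dec (s k) eps); [|assumption].
    exfalso. apply Hnever. exists k. auto. }
  destruct (pow_lt_1_zero rho ltac:(rewrite Rabs_pos_eq; lra) (eps / s 1%nat)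
              ltac:(apply Rdiv_lt_0_compat; lra)) as [N HN].
  specialize (HN N (le_n N)). rewrite Rabs_pos_eq in HN by (apply pow_le; lra).
  assert (rho ^ N * s 1%nat < eps).
  { apply (Rmult_lt_compat_r (s 1%nat)) in HN; [|lra].
    unfold Rdiv in HN. rewrite Rmult_assoc, Rinv_l in HN; lra. }
  pose proof (geometric_decay N (fun j Hj => Habove j (proj1 Hj))).
  pose proof (Habove (S N) ltac:(lia)). lra.
Qed.

Lemma first_entry_below : exists l, (1 <= l)%nat /\ s l < eps /\
  (forall k, (1 <= k)%nat -> (k < l)%nat -> eps <= s k /\ s (S k) <= rho ^ k * s 1%nat) /\
  (forall k, (l <= k)%nat -> s k <= eps).
Proof.
  set (P := fun k => (1 <= k)%nat /\ s k < eps).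
  assert (Pdec : forall k, P k \/ ~ P k).
  { intros k. unfold P.
    destruct (Nat.le_gt_cases 1 k), (Rlt_dec (s k) eps); try tauto; right; intros []; lia. }
  destruct (dec_inh_nat_subset_has_unique_least_element P Pdec eventually_below)
    as [l [[[Hl Hlt] Hleast] _]].
  assert (Hbefore : forall k, (1 <= k)%nat -> (k < l)%nat -> eps <= s k).
  { intros k Hk Hkl. destruct (Rlt_le_dec (s k) eps) as [Hs|]; [|assumption].
    specialize (Hleast k (conj Hk Hs)). lia. }
  exists l. split; [exact Hl|]. split; [exact Hlt|]. split.
  - intros k Hk Hkl. split; [now apply Hbefore|].
    apply geometric_decay. intros j Hj. apply Hbefore; lia.
  - intros k. induction k as [|k IH]; intros Hk; [lia|].
    destruct (Nat.eq_dec l (S k)) as [<-|]; [lra|].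
    apply Htrap; [lia | apply IH; lia].
Qed.

End FirstEntry.

Section BidAdjustment.
Variables (net : network) (a c beta : nat -> R).
Variables (b q xo : nat -> nat -> R) (zo : nat -> nat -> nat -> R).
Hypothesis Ha : forall n, (n < ng net)%nat -> 0 < a n.
Hypothesis Hc : forall n, (n < ng net)%nat -> 0 <= c n.
Hypothesis Hexec : BAA_execution net a c beta b q xo zo.
Hypothesis Hbeta : forall k n, (1 <= k)%nat -> (n < ng net)%nat -> 0 < beta k < 2 * a n.

Lemma bid_step k n : (1 <= k)%nat -> (n < ng net)%nat -> c n <= b k n ->
  b (S k) n = b k n + beta k * (xo k n - (b k n - c n) / (2 * a n)) /\ c n <= b (S k) n.
Proof.
  intros Hk Hn Hcb. destruct Hexec as [_ Hrec].
  destruct (Hrec k Hk) as [Hbr [[Fo _] Hupd]].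
  pose proof (Ha n Hn). pose proof (Hc n Hn). pose proof (Hbeta k n Hk Hn).
  assert (Hxo : 0 <= xo k n) by (apply (proj2 (proj2 Fo)), Hn).
  rewrite (Hupd n Hn), (best_response_eq _ _ _ _ (Ha n Hn) Hcb (Hbr n Hn)).
  (* beta < 2a makes the update c + (b - c)(1 - beta/(2a)) + beta xo >= c >= 0,
     so the projection onto [0, oo) is inactive *)
  assert (Hge : c n <= b k n + beta k * (xo k n - (b k n - c n) / (2 * a n))).
  { assert (Hfrac : beta k / (2 * a n) < 1).
    { apply (Rmult_lt_reg_r (2 * a n)); [lra|]. unfold Rdiv.
      rewrite Rmult_assoc, Rinv_l; lra. }
    assert (0 <= (b k n - c n) * (1 - beta k / (2 * a n))) by (apply Rmult_le_pos; lra).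
    replace (b k n + beta k * (xo k n - (b k n - c n) / (2 * a n)))
      with (c n + (b k n - c n) * (1 - beta k / (2 * a n)) + beta k * xo k n) by (field; lra).
    nra. }
  rewrite Rmax_right by lra. split; [reflexivity | exact Hge].
Qed.

Lemma bids_ge_cost k n : (1 <= k)%nat -> (n < ng net)%nat -> c n <= b k n.
Proof.
  intros Hk Hn. induction k as [|k IH]; [lia|].
  destruct (Nat.eq_dec k 0) as [->|Hk0]; [exact (proj1 Hexec n Hn)|].
  apply (bid_step k n); [lia | exact Hn | apply IH; lia].
Qed.

Variables (xs : nat -> R) (zs : nat -> nat -> R) (bs : nat -> R).
Hypothesis Hedges : forall i j, In (i, j) (edges net) -> (i < nb net)%nat /\ (j < nb net)%nat.
Hypothesis Hbus : forall n, (n < ng net)%nat -> (bus_of net n < nb net)%nat.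
Hypothesis Hopt : dcopf_opt net a c xs zs.
Hypothesis Hbs : forall n, (n < ng net)%nat -> bs n = 2 * a n * xs n + c n.

Lemma cross_term_nonpos k : (1 <= k)%nat ->
  rsum (ng net) (fun n => (b k n - bs n) * (xo k n - xs n)) <= 0.
Proof.
  intros Hk. destruct (proj2 Hexec k Hk) as [_ [[Fo Hxo] _]].
  pose proof (Hxo xs zs (proj1 Hopt)) as Hbid.
  pose proof (dcopf_first_order net a c xs zs (xo k) (zo k)
                (fun n Hn => Rlt_le _ _ (Ha n Hn)) Hopt Fo) as Hfirst.
  rewrite (rsum_ext _ _ (fun n => bs n * xs n)),
          (rsum_ext _ (fun n => _ * xo k n) (fun n => bs n * xo k n)) in Hfirst
    by (intros n Hn; now rewrite Hbs).
  rewrite (rsum_ext _ _ (fun n => (b k n * xo k n - b k n * xs n)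
                                - (bs n * xo k n - bs n * xs n))) by (intros; ring).
  rewrite rsum_minus, !rsum_minus. lra.
Qed.

Lemma sqdist_step k : (0 < ng net)%nat -> (1 <= k)%nat ->
  sqdist (ng net) (b (S k)) bs
  <= (1 - 2 * (beta k / (2 * amax net a)) + beta k ^ 2 / (2 * amin net a ^ 2))
     * sqdist (ng net) (b k) bs + 4 * beta k ^ 2 * ybar net ^ 2.
Proof.
  intros Hng Hk. set (C := 1 - 2 * (beta k / (2 * amax net a)) + beta k ^ 2 / (2 * amin net a ^ 2)).
  pose proof (proj1 (Hbeta k 0 Hk Hng)) as Hbk.
  assert (Hcomp : sqdist (ng net) (b (S k)) bs <= rsum (ng net) (fun n =>
            C * (b k n - bs n) ^ 2 + 2 * beta k * ((b k n - bs n) * (xo k n - xs n))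
            + 2 * beta k ^ 2 * (xo k n - xs n) ^ 2)).
  { apply rsum_le. intros n Hn.
    rewrite (proj1 (bid_step k n Hk Hn (bids_ge_cost k n Hk Hn))).
    replace (b k n + beta k * (xo k n - (b k n - c n) / (2 * a n)) - bs n)
      with ((b k n - bs n) + beta k * ((xo k n - xs n) - (b k n - bs n) / (2 * a n)))
      by (rewrite Hbs by exact Hn; pose proof (Ha n Hn); field; lra).
    apply error_step_sq; [apply amin_pos; auto | apply amin_le, Hn | apply amax_ge, Hn | lra]. }
  rewrite !rsum_plus, !rsum_scal in Hcomp.
  pose proof (cross_term_nonpos k Hk).
  destruct (proj2 Hexec k Hk) as [_ [[Fo _] _]].
  pose proof (feasible_sqdist_le net (xo k) (zo k) xs zs Hedges Hbus Fo (proj1 Hopt)).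
  unfold sqdist in *. fold C. nra.
Qed.

Variables (r alpha : R).
Hypothesis Hr : 0 < r.
Hypothesis Halpha : 0 < alpha.
Hypothesis Hstep : forall k, (1 <= k)%nat -> alpha <= beta k <= Bstep net a r.

Lemma sqdist_contract_or_trap k : (0 < ng net)%nat -> (1 <= k)%nat ->
  (r ^ 2 <= sqdist (ng net) (b k) bs ->
     sqdist (ng net) (b (S k)) bs <= (1 - alpha / (2 * amax net a)) * sqdist (ng net) (b k) bs) /\
  (sqdist (ng net) (b k) bs <= r ^ 2 -> sqdist (ng net) (b (S k)) bs <= r ^ 2).
Proof.
  intros Hng Hk.
  assert (HA : 0 < amax net a) by (pose proof (amax_ge net a 0%nat Hng); pose proof (Ha 0 Hng); lra).
  pose proof (Hbeta k 0 Hk Hng) as Hbk. pose proof (Hstep k Hk) as [Hlow HB].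
  assert (Hp : beta k / (2 * amax net a) <= 1).
  { pose proof (amax_ge net a 0%nat Hng). apply (Rmult_le_reg_r (2 * amax net a)); [lra|].
    unfold Rdiv. rewrite Rmult_assoc, Rinv_l; lra. }
  destruct (perturbed_contraction (sqdist (ng net) (b k) bs) (sqdist (ng net) (b (S k)) bs)
              r (beta k / (2 * amax net a)) (beta k ^ 2 / (2 * amin net a ^ 2))
              (4 * beta k ^ 2 * ybar net ^ 2)) as [Hout Hin]; auto.
  - apply rsum_nonneg. intros. apply pow2_ge_0.
  - pose proof (amin_pos net a Hng Ha). apply Rmult_le_pos; [nra|].
    left. apply Rinv_0_lt_compat. nra.
  - pose proof (pow2_ge_0 (beta k * ybar net)). nra.
  - apply Bstep_bound; auto; [apply amin_pos; auto | lra].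
  - apply sqdist_step; assumption.
  - split; [|exact Hin]. intros Hs. eapply Rle_trans; [apply Hout, Hs|].
    apply Rmult_le_compat_r; [apply rsum_nonneg; intros; apply pow2_ge_0|].
    assert (alpha / (2 * amax net a) <= beta k / (2 * amax net a)).
    { apply Rmult_le_compat_r; [left; apply Rinv_0_lt_compat|]; lra. }
    lra.
Qed.

Lemma contraction_rate_bounds : (0 < ng net)%nat -> 0 < 1 - alpha / (2 * amax net a) < 1.
Proof.
  intros Hng. pose proof (amax_ge net a 0%nat Hng).
  pose proof (Hbeta 1%nat 0%nat (le_n 1) Hng). pose proof (proj1 (Hstep 1%nat (le_n 1))).
  assert (0 < alpha / (2 * amax net a) < 1); [|lra].
  split; [apply Rdiv_lt_0_compat; lra|].
  apply (Rmult_lt_reg_r (2 * amax net a)); [lra|]. unfold Rdiv.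
  rewrite Rmult_assoc, Rinv_l; lra.
Qed.

End BidAdjustment.

Lemma sqrt_lt_of_lt_sq x r : 0 <= x -> 0 <= r -> x < r ^ 2 -> sqrt x < r.
Proof. intros Hx Hr H. rewrite <- (sqrt_pow2 r Hr). now apply sqrt_lt_1_alt. Qed.

Lemma sqrt_le_of_le_sq x r : 0 <= r -> x <= r ^ 2 -> sqrt x <= r.
Proof. intros Hr H. rewrite <- (sqrt_pow2 r Hr). now apply sqrt_le_1_alt. Qed.

Lemma le_sqrt_of_sq_le x r : 0 <= r -> r ^ 2 <= x -> r <= sqrt x.
Proof. intros Hr H. rewrite <- (sqrt_pow2 r Hr). now apply sqrt_le_1_alt. Qed.

Lemma one_le_sqrt_one_plus x : 0 <= x -> 1 <= sqrt (1 + x).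
Proof. intros Hx. rewrite <- sqrt_1 at 1. apply sqrt_le_1_alt. lra. Qed.

Lemma Rpower_half_INR x k : 0 < x -> Rpower x (INR k / 2) = sqrt (x ^ k).
Proof.
  intros Hx. unfold Rdiv. rewrite <- Rpower_mult, Rpower_pow by assumption.
  apply Rpower_sqrt, pow_lt, Hx.
Qed.

Theorem theorem4p5
  (net : network) (a c : nat -> R)
  (Hedges : forall i j, In (i, j) (edges net) -> (i < nb net)%nat /\ (j < nb net)%nat)
  (Hnodup : NoDup (edges net))
  (Hzbar : forall i j, In (i, j) (edges net) -> 0 < zbar net i j)
  (Hbus : forall n, (n < ng net)%nat -> (bus_of net n < nb net)%nat)
  (Hload : forall i, (i < nb net)%nat -> 0 <= load net i)
  (Ha : forall n, (n < ng net)%nat -> 0 < a n)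
  (Hc : forall n, (n < ng net)%nat -> 0 <= c n)
  (xs : nat -> R) (zs : nat -> nat -> R)
  (Hopt : dcopf_opt net a c xs zs)
  (Huniq : forall x z, dcopf_opt net a c x z -> forall n, (n < ng net)%nat -> x n = xs n)
  (Hgens : forall i, (i < nb net)%nat -> ngen_at net i = 0%nat \/ (2 <= ngen_at net i)%nat)
  (Hxpos : forall n, (n < ng net)%nat -> 0 < xs n)
  (bs : nat -> R)
  (Hbs : forall n, (n < ng net)%nat -> bs n = 2 * a n * xs n + c n)
  (beta : nat -> R) (b q xo : nat -> nat -> R) (zo : nat -> nat -> nat -> R)
  (Hexec : BAA_execution net a c beta b q xo zo)
  (Hbeta : forall k n, (1 <= k)%nat -> (n < ng net)%nat -> 0 < beta k < 2 * a n)
  (r : R) (Hr : 0 < r < bdist (ng net) (b 1%nat) bs)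
  (alpha : R) (Halpha : 0 < alpha)
  (Hstep : forall k, (1 <= k)%nat -> alpha <= beta k <= Bstep net a r) :
  exists l : nat, (1 <= l)%nat /\
    bdist (ng net) (b l) bs < r /\
    (forall k, (1 <= k)%nat -> (k <= l - 1)%nat ->
       r <= bdist (ng net) (b k) bs /\
       bdist (ng net) (b (S k)) bs
         <= Rpower (1 - alpha / (2 * amax net a)) (INR k / 2)
            * bdist (ng net) (b 1%nat) bs) /\
    (forall k, (l <= k)%nat ->
       bdist (ng net) (b k) bs <= sqrt (1 + Bstep net a r / (2 * amax net a)) * r).
Proof.
  assert (Hng : (0 < ng net)%nat).
  { destruct (ng net) eqn:E; [|lia]. unfold bdist in Hr. rewrite rsum_0, sqrt_0 in Hr. lra. }
  set (s k := sqdist (ng net) (b k) bs).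
  assert (Hs : forall k, 0 <= s k) by (intros; apply rsum_nonneg; intros; apply pow2_ge_0).
  assert (Hs1 : r ^ 2 < s 1%nat).
  { apply sqrt_lt_0_alt. rewrite sqrt_pow2 by lra. exact (proj2 Hr). }
  pose proof (contraction_rate_bounds net a beta Hbeta r alpha Halpha Hstep Hng) as Hrate.
  pose proof (sqdist_contract_or_trap net a c beta b q xo zo Ha Hc Hexec Hbeta
                xs zs bs Hedges Hbus Hopt Hbs r alpha (proj1 Hr) Hstep) as Hdyn.
  destruct (first_entry_below s _ (r ^ 2) (conj (Rlt_le _ _ (proj1 Hrate)) (proj2 Hrate))
              (pow_lt r 2 (proj1 Hr)) Hs1
              (fun k Hk => proj1 (Hdyn k Hng Hk)) (fun k Hk => proj2 (Hdyn k Hng Hk)))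
    as [l [Hl [Hbelow [Hbefore Hafter]]]].
  exists l. split; [exact Hl|]. split; [|split].
  - apply sqrt_lt_of_lt_sq; [apply Hs | lra | exact Hbelow].
  - intros k Hk Hkl. destruct (Hbefore k Hk ltac:(lia)) as [Habove Hdecay].
    split; [apply le_sqrt_of_sq_le; [lra | exact Habove]|].
    change (sqrt (s (S k)) <= Rpower (1 - alpha / (2 * amax net a)) (INR k / 2) * sqrt (s 1%nat)).
    rewrite Rpower_half_INR, <- sqrt_mult_alt by (try apply pow_le; lra).
    apply sqrt_le_1_alt, Hdecay.
  - intros k Hk. change (sqrt (s k) <= sqrt (1 + Bstep net a r / (2 * amax net a)) * r).
    (* the ball of radius r is itself invariant, a sharper bound *)
    assert (Hball : sqrt (s k) <= r) by (apply sqrt_le_of_le_sq; [lra | auto]).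
    assert (Hfactor : 1 <= sqrt (1 + Bstep net a r / (2 * amax net a))).
    { pose proof (amax_ge net a 0%nat Hng). pose proof (Ha 0%nat Hng).
      pose proof (Hbeta 1%nat 0%nat (le_n 1) Hng). pose proof (proj2 (Hstep 1%nat (le_n 1))).
      apply one_le_sqrt_one_plus, Rmult_le_pos; [lra | left; apply Rinv_0_lt_compat; lra]. }
    pose proof (Rmult_le_compat_r r _ _ (Rlt_le _ _ (proj1 Hr)) Hfactor). lra.
Qed.
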